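(* Let $\ell\ge1$ and $n\ge\ell+1$ be integers, let $\mu>\ell-\frac32$ be real, $C_0\in\mathbb R$, and let $F_0(r)=C_0\,r^{\mu-\frac12}e^{-r/2}L^{(2\mu)}_{n-\ell-1}(r)$ for $r>0$, extended to $r<0$ by $F_0(-r)=(-1)^\ell F_0(r)$. Let $F(r,t)$ be the solution of $$F_{tt}-F_{rr}-\frac2rF_r+\frac{\ell(\ell+1)}{r^2}F=0,\qquad F(r,0)=F_0(r),\ F_t(r,0)=0,$$ given by $$F(r,t)=\frac1{2r}\big[(r-t)F_0(r-t)+(r+t)F_0(r+t)\big]-\frac{\ell(\ell+1)\,t}{4r^2}\int_{r-t}^{r+t}F_0(s)\,{}_2F_1\!\Big(1-\ell,\ell+2;2;\frac{t^2-(r-s)^2}{4rs}\Big)ds.$$ Then for every $r>0$ there exist constants $C(r)>0$ and $T(r)>0$ such that for all $t\ge T(r)$, $$\Big|F(r,t)-\frac1{2r}\big[(r-t)F_0(r-t)+(r+t)F_0(r+t)\big]\Big|\le C(r)\,e^{-t/2}\,t^{\,n+\mu-\frac32}.$$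
   Context: $L^{(\alpha)}_k$ denotes the generalized Laguerre polynomial of degree $k$; ${}_2F_1$ is the Gauss hypergeometric function (a polynomial of degree $\ell-1$ in its last argument here). This $F_0$ is the radial wave function of a pionic atom. *)

From mathcomp Require Import all_boot all_order all_algebra.
From mathcomp Require Import all_classical all_reals all_analysis.
Set Implicit Arguments. Unset Strict Implicit. Unset Printing Implicit Defensive.
Import Order.TTheory GRing.Theory Num.Theory.
Local Open Scope ring_scope.

Section Defs.
Variable R : realType.

Definition gbinom (y : R) (j : nat) : R :=
  (\prod_(m < j) (y - m%:R)) / (j`!)%:R.

Definition laguerre (alpha : R) (k : nat) (x : R) : R :=
  \sum_(i < k.+1) (-1) ^+ i * gbinom (k%:R + alpha) (k - i) * x ^+ i / (i`!)%:R.

Definition pochhammer (a : R) (m : nat) : R := \prod_(j < m) (a + j%:R).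

(* Gauss hypergeometric 2F1(1-l, l+2; 2; z): the series terminates since
   (1-l)_m = 0 for m >= l, so it is the finite sum over m = 0..l-1. *)
Definition hyp2F1_l (l : nat) (z : R) : R :=
  \sum_(m < l)
     pochhammer (1 - l%:R) m * pochhammer (l%:R + 2) m
     / (pochhammer 2 m * (m`!)%:R) * z ^+ m.

(* F_0 on r > 0, extended oddly/evenly: F_0(-r) = (-1)^l F_0(r); F_0(0) := 0
   (irrelevant: measure zero, and only appears multiplied by 0). *)
Definition F0pos (l n : nat) (mu C0 r : R) : R :=
  C0 * powR r (mu - 2^-1) * expR (- r / 2) * laguerre (2 * mu) (n - l - 1) r.

Definition F0 (l n : nat) (mu C0 r : R) : R :=
  if 0 < r then F0pos l n mu C0 r
  else if r < 0 then (-1) ^+ l * F0pos l n mu C0 (- r)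
  else 0.

Definition Dpart (l n : nat) (mu C0 r t : R) : R :=
  (2 * r)^-1 * ((r - t) * F0 l n mu C0 (r - t) + (r + t) * F0 l n mu C0 (r + t)).

Definition Fsol (l n : nat) (mu C0 r t : R) : R :=
  Dpart l n mu C0 r t
  - (l%:R * (l%:R + 1) * t) / (4 * r ^+ 2) *
    Rintegral (@lebesgue_measure R) `[r - t, r + t]%classic
      (fun s => F0 l n mu C0 s *
                hyp2F1_l l ((t ^+ 2 - (r - s) ^+ 2) / (4 * r * s))).
End Defs.

(* The integrand [s |-> F_0(s) 2F1(1-l, l+2; 2; z(s))], with
   [z(s) = (t^2 - (r-s)^2) / (4 r s)], is odd in [s]: [F_0(-s) = (-1)^l F_0(s)],
   [z(-s) = 1 - z(s)], and [2F1(1-l, l+2; 2; 1-z) = (-1)^(l-1) 2F1(1-l, l+2; 2; z)]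
   because [z |-> 1 - z] maps the hypergeometric equation with parameters [(a, b, c)]
   to the one with [(a, b, a+b+1-c)], here [c = a+b+1-c = 2], whose polynomial
   solutions form a line.  So the integral over [[r-t, r+t] = [-(t-r), t+r]]
   reduces to the interval [(t-r, t+r]] of length [2r], on which [|z| <= 1] and
   [|F_0(s)| <= C e^(-t/2) t^(n-l-1+mu-1/2)]. *)

From mathcomp Require Import all_boot all_order all_algebra.
From mathcomp Require Import all_classical all_reals all_analysis.
From mathcomp Require Import measurable_realfun.
From mathcomp Require Import ring lra zify.
Import Order.TTheory GRing.Theory Num.Theory.
Set Implicit Arguments.
Unset Strict Implicit.
Unset Printing Implicit Defensive.
Local Open Scope ring_scope.

Section HypergeometricEquation.
Variable R : idomainType.
Implicit Types (a b c : R) (y p : {poly R}).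

Definition hypergeom_op a b c y : {poly R} :=
  y^`()^`() * ('X - 'X ^+ 2) + y^`() * (c%:P - (a + b + 1)%:P * 'X) - (a * b)%:P * y.

Lemma coef_hypergeom_op a b c y m :
  (hypergeom_op a b c y)`_m =
  y`_m.+1 * (m.+1%:R * (m%:R + c)) - y`_m * ((m%:R + a) * (m%:R + b)).
Proof.
rewrite /hypergeom_op expr2 !(mulrBr, mulrDr, mulrN, mulrA).
rewrite !(coefD, coefB, coefN, coefCM, coefMX, coefMC, coef_deriv).
by case: m => [|[|m]] /=; rewrite ?coef_deriv; ring.
Qed.

Lemma hypergeom_op_reflect a b c y :
  hypergeom_op a b c (y \Po (1 - 'X)) = hypergeom_op a b (a + b + 1 - c) y \Po (1 - 'X).
Proof.
have d1X : (1 - 'X : {poly R})^`() = -1 by rewrite derivB derivC derivX sub0r.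
rewrite /hypergeom_op !expr2 !deriv_comp d1X !mulrN1 !derivN !deriv_comp d1X.
rewrite !(comp_polyB, comp_polyD, comp_polyM, comp_polyC, comp_polyX).
rewrite !polyCD ?polyCB; ring.
Qed.

Lemma hypergeom_op_kernel a b c y p :
  (forall m, m.+1%:R * (m%:R + c) != 0) ->
  hypergeom_op a b c y = 0 -> hypergeom_op a b c p = 0 -> p`_0 = 1 ->
  y = y`_0 *: p.
Proof.
move=> c_ok y0 p0 p0_1; apply/polyP => m; rewrite coefZ.
elim: m => [|m IH]; first by rewrite p0_1 mulr1.
have /eqP := coef_hypergeom_op a b c y m; rewrite y0 coef0 eq_sym subr_eq0 => /eqP ry.
have /eqP := coef_hypergeom_op a b c p m; rewrite p0 coef0 eq_sym subr_eq0 => /eqP rp.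
by apply: (mulIf (c_ok m)); rewrite ry IH -mulrA -rp mulrA.
Qed.
End HypergeometricEquation.

Section Hyp2F1Polynomial.
Variables (R : realType) (l : nat).

Lemma pochhammer_gt0 (a : R) m : 0 < a -> 0 < pochhammer a m.
Proof. by move=> a0; apply: prodr_gt0 => i _; rewrite ltr_wpDr. Qed.

Definition hyp2F1_coef m : R :=
  pochhammer (1 - l%:R) m * pochhammer (l%:R + 2) m / (pochhammer 2 m * (m`!)%:R).

Definition hyp2F1_poly : {poly R} := \poly_(m < l) hyp2F1_coef m.

Lemma hyp2F1_lE (z : R) : hyp2F1_l l z = hyp2F1_poly.[z].
Proof. by rewrite horner_poly. Qed.

Lemma hyp2F1_coefS m : hyp2F1_coef m.+1 * (m.+1%:R * (m%:R + 2)) =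
  hyp2F1_coef m * ((m%:R + (1 - l%:R)) * (m%:R + (l%:R + 2))).
Proof.
have p2 : 0 < pochhammer (2 : R) m by apply: pochhammer_gt0.
rewrite /hyp2F1_coef /pochhammer !big_ord_recr /= factS !natrM -/(pochhammer 2 m).
have mf : (m`!)%:R != 0 :> R by rewrite pnatr_eq0 -lt0n fact_gt0.
have m0 : 0 <= m%:R :> R by [].
field; rewrite mf gt_eqF //= !gt_eqF //; lra.
Qed.

Lemma hypergeom_op_hyp2F1_poly : hypergeom_op (1 - l%:R) (l%:R + 2) 2 hyp2F1_poly = 0.
Proof.
apply/polyP => m; rewrite coef_hypergeom_op coef0 !coef_poly.
case: (ltnP m.+1 l) => [lt_m1l|le_lm1]; first by rewrite (ltnW lt_m1l) hyp2F1_coefS subrr.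
rewrite mul0r sub0r; case: ltnP => [lt_ml|]; last by rewrite mul0r oppr0.
have -> : l = m.+1 by apply/eqP; rewrite eqn_leq le_lm1 lt_ml.
by rewrite -natr1 (_ : m%:R + (1 - (m%:R + 1)) = 0 :> R) ?mul0r ?mulr0 ?oppr0 //; ring.
Qed.

Hypothesis l_gt0 : (0 < l)%N.

Lemma hyp2F1_poly_coef0 : hyp2F1_poly`_0 = 1.
Proof.
by rewrite coef_poly l_gt0 /hyp2F1_coef /pochhammer !big_ord0 fact0 mulr1 mul1r invr1.
Qed.

Lemma hyp2F1_coef_neq0 m : (m < l)%N -> hyp2F1_coef m != 0.
Proof.
move=> lt_ml; have l0 : 0 <= l%:R :> R by [].
have pl : pochhammer (1 - l%:R) m != 0 :> R.
  rewrite /pochhammer; apply/prodf_neq0 => i _.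
  have : (i.+1 < l)%N by apply: leq_ltn_trans lt_ml.
  by rewrite -(ltr_nat R) -natr1 => ?; rewrite lt_eqF //; lra.
have pl2 : pochhammer (l%:R + 2) m != 0 :> R by rewrite gt_eqF ?pochhammer_gt0 //; lra.
have p2 : pochhammer 2 m != 0 :> R by rewrite gt_eqF ?pochhammer_gt0.
have fm : (m`!)%:R != 0 :> R by rewrite pnatr_eq0 -lt0n fact_gt0.
by rewrite /hyp2F1_coef !mulf_neq0 // invr_neq0 // mulf_neq0.
Qed.

Lemma size_hyp2F1_poly : size hyp2F1_poly = l.
Proof. by rewrite size_poly_eq // hyp2F1_coef_neq0 // prednK. Qed.

Lemma hyp2F1_poly_reflect : hyp2F1_poly \Po (1 - 'X) = (-1) ^+ l.-1 *: hyp2F1_poly.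
Proof.
have c2 m : m.+1%:R * (m%:R + 2) != 0 :> R.
  by rewrite mulf_neq0 // -natrD pnatr_eq0 addn2.
have hom : hypergeom_op (1 - l%:R) (l%:R + 2) 2 (hyp2F1_poly \Po (1 - 'X)) = 0.
  rewrite hypergeom_op_reflect (_ : _ + _ + 1 - 2 = 2); last by ring.
  by rewrite hypergeom_op_hyp2F1_poly comp_poly0.
have size1X : size (1 - 'X : {poly R}) = 2.
  by rewrite -opprB size_polyN size_XsubC.
have lead1X : lead_coef (1 - 'X : {poly R}) = -1.
  by rewrite -opprB lead_coefN lead_coefXsubC.
have lead_neq0 : lead_coef hyp2F1_poly != 0.
  by rewrite lead_coef_eq0 -size_poly_eq0 size_hyp2F1_poly -lt0n.
have E := hypergeom_op_kernel c2 hom hypergeom_op_hyp2F1_poly hyp2F1_poly_coef0.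
have := @lead_coef_comp _ hyp2F1_poly (1 - 'X); rewrite size1X => /(_ isT).
rewrite lead1X size_hyp2F1_poly {1}E lead_coefZ => lead_eq.
by rewrite E; congr (_ *: _); apply: (mulIf lead_neq0); rewrite lead_eq mulrC.
Qed.

Lemma hyp2F1_l_reflect (z : R) : hyp2F1_l l (1 - z) = (-1) ^+ l.-1 * hyp2F1_l l z.
Proof.
have -> : 1 - z = (1 - 'X).[z] by rewrite hornerD hornerN hornerX hornerC.
by rewrite !hyp2F1_lE -horner_comp hyp2F1_poly_reflect hornerZ.
Qed.
End Hyp2F1Polynomial.

Section Measurability.
Variable R : realType.

Lemma invr_measurable : measurable_fun setT (@GRing.inv R).
Proof.
apply: (eq_measurable_fun (fun x : R => if 0 <= x then powR x (-1) else - powR (- x) (-1))).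
  move=> x _; case: ifPn => x0; first by rewrite powR_inv1.
  by rewrite powR_inv1 ?invrN ?opprK // oppr_ge0 ltW // ltNge.
apply: measurable_fun_if => //; first exact: measurable_fun_ler.
  exact: measurable_funS (measurable_powR _).
apply: measurable_funS (_ : measurable_fun setT (fun x : R => - powR (- x) (-1))) => //.
apply: measurable_funN.
exact: measurableT_comp (measurable_powR _) (@oppr_measurable R setT).
Qed.

Lemma laguerre_measurable (a : R) k : measurable_fun setT (laguerre a k).
Proof.
apply: measurable_sum => i.
by do 2 apply: measurable_funM => //; exact: exprn_measurable.
Qed.

Lemma hyp2F1_l_measurable l : measurable_fun setT (@hyp2F1_l R l).
Proof. by apply: measurable_sum => m; apply: measurable_funM => //; exact: exprn_measurable. Qed.

Lemma F0pos_measurable l n (mu C0 : R) : measurable_fun setT (F0pos l n mu C0).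
Proof.
apply: measurable_funM; last exact: laguerre_measurable.
apply: measurable_funM.
  by apply: measurable_funM => //; exact: measurable_powR.
apply: measurableT_comp; first exact: measurable_expR.
by apply: measurable_funM => //; exact: measurable_funN.
Qed.

Lemma F0_measurable l n (mu C0 : R) : measurable_fun setT (F0 l n mu C0).
Proof.
have mF0N : measurable_fun setT (fun x : R => (-1) ^+ l * F0pos l n mu C0 (- x)).
  apply: measurable_funM => //.
  exact: measurableT_comp (F0pos_measurable _ _ _ _) (@oppr_measurable R setT).
apply: measurable_fun_if => //; first exact: measurable_fun_ltr.
  exact: measurable_funS (F0pos_measurable _ _ _ _).
apply: measurable_funS (_ : measurable_fun setT
  (fun x : R => if x < 0 then (-1) ^+ l * F0pos l n mu C0 (- x) else 0)) => //.
apply: measurable_fun_if => //; first exact: measurable_fun_ltr.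
exact: measurable_funS mF0N.
Qed.
End Measurability.

Section OddIntegral.
Variable R : realType.
Local Notation mu := (@lebesgue_measure R).
Local Open Scope ereal_scope.

Lemma ge0_integral_reflect (phi : R -> \bar R) (A : set R) : measurable A ->
  measurable_fun setT phi -> (forall x, 0 <= phi x) ->
  \int[mu]_(x in A) phi x = \int[mu]_(x in -%R @^-1` A) phi (- x)%R.
Proof.
move=> mA mphi phi0.
have mN : measurable_fun setT (-%R : measurableTypeR R -> measurableTypeR R).
  exact: oppr_measurable.
rewrite -[RHS](ge0_integral_pushforward mN mu mA) //=; last exact: measurable_funS mphi.
by apply: eq_measure_integral => //= B mB _; exact/esym/lebesgue_measureN.
Qed.

Lemma ge0_integral_itv_bndbnd (phi : R -> \bar R) (c x d : itv_bound R) :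
  (c <= x)%O -> (x <= d)%O -> measurable_fun setT phi -> (forall y, 0 <= phi y) ->
  \int[mu]_(y in [set` Interval c d]) phi y =
  \int[mu]_(y in [set` Interval c x]) phi y + \int[mu]_(y in [set` Interval x d]) phi y.
Proof.
move=> cx xd mphi phi0; rewrite (itv_bndbnd_setU cx xd) ge0_integral_setU //.
- exact: measurable_funS mphi.
- apply: (@lt_disjoint R (Interval _ _) (Interval _ _)) => y z.
  rewrite !itv_boundlr => /andP[_ yx] /andP[xz _].
  by have := le_trans yx xz; rewrite bnd_simp.
Qed.

Lemma norm_fine_cancel_le (U V : \bar R) (p q K : R) : 0 <= U -> 0 <= V ->
  (0 <= p <= K)%R -> (0 <= q <= K)%R ->
  (`|fine ((U + (V + p%:E)) - (V + (U + q%:E)))| <= K)%R.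
Proof.
move=> U0 V0 /andP[p0 pK] /andP[q0 qK].
case: U U0 => [u| |] // U0; case: V V0 => [v| |] // V0 /=; rewrite ?normr0 ?(le_trans p0) //.
by rewrite ler_norml; apply/andP; split; lra.
Qed.

Lemma ge0_integral_itv_oc_fin (phi : R -> \bar R) (a b M : R) : (a <= b)%R -> (0 <= M)%R ->
  measurable_fun setT phi -> (forall x, 0 <= phi x) ->
  (forall x, (a < x <= b)%R -> phi x <= M%:E) ->
  exists2 p : R, \int[mu]_(x in `]a, b]) phi x = p%:E & (0 <= p <= M * (b - a))%R.
Proof.
move=> ab M0 mphi phi0 phiM.
have int_le : \int[mu]_(x in `]a, b]) phi x <= (M * (b - a))%:E.
  apply: (@le_trans _ _ (\int[mu]_(x in `]a, b]) (cst M%:E) x)).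
    by apply: ge0_le_integral => //; exact: measurable_funS mphi.
  rewrite integral_cst //= lebesgue_measure_itv /= lte_fin.
  case: ltP => [_|ba]; first by rewrite -EFinD -EFinM.
  by rewrite mule0 (_ : b = a) ?subrr ?mulr0 //; apply/eqP; rewrite eq_le ab ba.
have : 0 <= \int[mu]_(x in `]a, b]) phi x by apply: integral_ge0 => x _.
move: int_le.
by case: (\int[mu]_(x in _) _) => [p| |] //= pM p0; exists p; rewrite // -!lee_fin p0.
Qed.

Lemma Rintegral_odd_le (g : R -> R) (a b M : R) : (0 <= a <= b)%R -> (0 <= M)%R ->
  measurable_fun setT g -> (forall x, g (- x) = - g x)%R ->
  (forall x, (a < x <= b)%R -> `|g x| <= M)%R ->
  (`|Rintegral mu `[(- a)%R, b] g| <= M * (b - a))%R.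
Proof.
move=> /andP[a0 ab] M0 mg g_odd gM; set f := fun x => (g x)%:E.
have mf : measurable_fun setT f by exact/measurable_EFinP.
have mfp := measurable_funepos mf; have mfn := measurable_funeneg mf.
have fp0 x : 0 <= f^\+ x by exact: funepos_ge0.
have fn0 x : 0 <= f^\- x by exact: funeneg_ge0.
have fpN x : f^\+ (- x)%R = f^\- x by rewrite funeposE funenegE /f g_odd EFinN.
have fnN x : f^\- (- x)%R = f^\+ x by rewrite funeposE funenegE /f g_odd EFinN oppeK.
have integral_split (phi : R -> \bar R) : measurable_fun setT phi -> (forall x, 0 <= phi x) ->
  \int[mu]_(x in `[(- a)%R, b]) phi x = \int[mu]_(x in `]0%R, a]) phi (- x)%R +
    (\int[mu]_(x in `]0%R, a]) phi x + \int[mu]_(x in `]a, b]) phi x).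
  move=> mphi phi0.
  rewrite (@ge0_integral_itv_bndbnd _ (BLeft (- a)%R) (BLeft 0%R) (BRight b)) ?bnd_simp //;
    [|lra|lra].
  rewrite (@ge0_integral_itv_bndbnd _ (BLeft 0%R) (BRight a) (BRight b)) ?bnd_simp //.
  rewrite (@ge0_integral_reflect _ `[(- a)%R, 0%R[) //.
  rewrite opp_preimage_itvbndbnd /= oppr0 opprK.
  by rewrite -(@integral_itv_obnd_cbnd _ 0%R (BRight a)) //; exact: measurable_funS mphi.
(* Splitting [f] into [f^\+] and [f^\-] avoids any integrability assumption: by
   oddness both parts contribute the same (possibly infinite) amount on [[-a, a]]. *)
rewrite /Rintegral integralE (integral_split _ mfp fp0) (integral_split _ mfn fn0).
under eq_integral do rewrite fpN.
under [X in _ - (X + _)]eq_integral do rewrite fnN.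
have [p -> p_bd] : exists2 p : R,
    \int[mu]_(x in `]a, b]) f^\+ x = p%:E & (0 <= p <= M * (b - a))%R.
  apply: ge0_integral_itv_oc_fin => // x /gM gxM.
  by rewrite funeposE ge_max !lee_fin M0 andbT (le_trans (ler_norm _)).
have [q -> q_bd] : exists2 q : R,
    \int[mu]_(x in `]a, b]) f^\- x = q%:E & (0 <= q <= M * (b - a))%R.
  apply: ge0_integral_itv_oc_fin => // x /gM gxM.
  by rewrite funenegE ge_max -EFinN !lee_fin M0 andbT (le_trans (ler_norm _)) ?normrN.
by apply: norm_fine_cancel_le => //; exact: integral_ge0.
Qed.
End OddIntegral.

Section Bounds.
Variable R : realType.

Lemma norm_sum_expr_le (k : nat) (c : nat -> R) (x X : R) : 1 <= X -> `|x| <= X ->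
  `|\sum_(i < k) c i * x ^+ i| <= (\sum_(i < k) `|c i|) * X ^+ k.-1.
Proof.
move=> X1 xX; apply: (le_trans (ler_norm_sum _ _ _)); rewrite mulr_suml.
apply: ler_sum => i _; rewrite normrM normrX ler_wpM2l //.
apply: (@le_trans _ _ (X ^+ i)); first by rewrite lerXn2r // nnegrE; lra.
by rewrite ler_weXn2l // -ltnS prednK // (leq_ltn_trans _ (ltn_ord i)).
Qed.

Lemma laguerre_growth (a : R) k : exists2 c, 0 <= c &
  forall x X, 1 <= X -> `|x| <= X -> `|laguerre a k x| <= c * X ^+ k.
Proof.
pose c i := (-1) ^+ i * gbinom (k%:R + a) (k - i) / (i`!)%:R.
exists (\sum_(i < k.+1) `|c i|); first exact: sumr_ge0.
move=> x X X1 xX; rewrite /laguerre.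
under eq_bigr do rewrite mulrAC.
exact: (norm_sum_expr_le k.+1 c X1 xX).
Qed.

Lemma hyp2F1_l_bounded l : exists2 H, 0 <= H &
  forall z : R, `|z| <= 1 -> `|hyp2F1_l l z| <= H.
Proof.
exists (\sum_(m < l) `|hyp2F1_coef R l m|); first exact: sumr_ge0.
move=> z z1; rewrite -[X in _ <= X]mulr1 -(expr1n _ l.-1).
exact: (norm_sum_expr_le l (hyp2F1_coef R l) (lexx 1) z1).
Qed.

Lemma powR_le_within2 (e x t : R) : 0 < t -> t / 2 <= x <= 2 * t ->
  powR x e <= (powR 2 e + powR (2^-1) e) * powR t e.
Proof.
move=> t0 /andP[tx xt].
have := powR_ge0 2 e; have := powR_ge0 (2^-1) e; have := powR_ge0 t e.
have [e0|e0] := leP 0 e.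
  have : powR x e <= powR (2 * t) e by apply: ge0_ler_powR; rewrite ?nnegrE //; lra.
  rewrite powRM //; [nra | lra].
have : powR x e <= powR (2^-1 * t) e.
  have x0 : 0 < x by lra.
  have t20 : 0 < 2^-1 * t by lra.
  rewrite -(opprK e) !(powRN _ (- e)) lef_pV2 ?posrE ?powR_gt0 //.
  by apply: ge0_ler_powR; rewrite ?nnegrE //; lra.
rewrite powRM //; [nra | lra].
Qed.
Lemma exprn_mulpowR (t e : R) k : 0 < t -> t ^+ k * powR t e = powR t (k%:R + e).
Proof. by move=> t0; rewrite powRD ?(gt_eqF t0) ?implybT // powR_mulrn // ltW. Qed.
End Bounds.

Section Integrand.
Variables (R : realType) (l n : nat) (mu C0 : R).

Lemma F0N (s : R) : F0 l n mu C0 (- s) = (-1) ^+ l * F0 l n mu C0 s.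
Proof.
rewrite /F0 oppr_gt0 oppr_lt0 opprK.
by case: (ltrgtP s 0) => _; rewrite ?mulr0 // mulrA -expr2 sqrr_sign mul1r.
Qed.

Definition hyp_arg (r t s : R) : R := (t ^+ 2 - (r - s) ^+ 2) / (4 * r * s).

Lemma hyp_argN (r t s : R) : r != 0 -> s != 0 -> hyp_arg r t (- s) = 1 - hyp_arg r t s.
Proof. by move=> r0 s0; rewrite /hyp_arg; field; rewrite r0 s0. Qed.

Lemma norm_hyp_arg_le1 (r t s : R) : 0 < r -> r <= t -> t - r < s <= r + t ->
  `|hyp_arg r t s| <= 1.
Proof.
move=> r0 rt /andP[s_gt s_le]; have s0 : 0 < s by lra.
have rs0 : 0 < 4 * r * s by rewrite !mulr_gt0.
rewrite ler_norml ler_pdivrMr // ler_pdivlMr // mul1r mulN1r.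
by apply/andP; split; nra.
Qed.

Definition Fsol_integrand (r t s : R) : R := F0 l n mu C0 s * hyp2F1_l l (hyp_arg r t s).

Lemma Fsol_integrand_measurable (r t : R) : measurable_fun setT (Fsol_integrand r t).
Proof.
apply: measurable_funM; first exact: F0_measurable.
apply: measurableT_comp; first exact: hyp2F1_l_measurable.
apply: measurable_funM.
  by apply: measurable_funB => //; apply: measurable_funX; exact: measurable_funB.
apply: measurableT_comp; first exact: invr_measurable.
exact: mulrl_measurable.
Qed.

Lemma Fsol_integrandN (r t : R) : (0 < l)%N -> r != 0 ->
  forall s, Fsol_integrand r t (- s) = - Fsol_integrand r t s.
Proof.
move=> l_gt0 r0 s; have [->|s0] := eqVneq s 0.
  by rewrite oppr0 /Fsol_integrand /F0 ltxx mul0r oppr0.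
rewrite /Fsol_integrand F0N hyp_argN // hyp2F1_l_reflect //.
rewrite -[in (-1) ^+ l](prednK l_gt0) exprS.
have sq1 : (-1) ^+ l.-1 * (-1) ^+ l.-1 = 1 :> R by rewrite -exprMn mulrNN mulr1 expr1n.
set u := (-1) ^+ l.-1 in sq1 *; set F := F0 _ _ _ _ _; set H := hyp2F1_l _ _.
have -> : -1 * u * F * (u * H) = - (u * u) * (F * H) by ring.
by rewrite sq1 mulN1r.
Qed.

Lemma Fsol_integrand_bound (r : R) : 0 < r -> exists2 A, 0 <= A &
  forall t s, 2 * r + 1 <= t -> t - r < s <= r + t ->
  `|Fsol_integrand r t s| <= A * (powR t (mu - 2^-1) * t ^+ (n - l - 1) * expR (- t / 2)).
Proof.
move=> r0; set e := mu - 2^-1; set k := (n - l - 1)%N.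
have [c c0 lag_le] := laguerre_growth (2 * mu) k.
have [H H0 hyp_le] := hyp2F1_l_bounded R l.
set P := powR 2 e + powR (2^-1) e.
have P0 : 0 <= P by rewrite addr_ge0 ?powR_ge0.
exists (`|C0| * P * expR (r / 2) * (c * 2 ^+ k) * H).
  by rewrite !mulr_ge0 ?expR_ge0 ?exprn_ge0.
move=> t s tr /andP[s_gt s_le]; have s0 : 0 < s by lra.
have pow_le : powR s e <= P * powR t e by apply: powR_le_within2; lra.
have exp_le : expR (- s / 2) <= expR (r / 2) * expR (- t / 2).
  by rewrite -expRD ler_expR; lra.
have lag_le' : `|laguerre (2 * mu) k s| <= c * 2 ^+ k * t ^+ k.
  by rewrite -mulrA -exprMn; apply: lag_le; rewrite ?ger0_norm; lra.
have hyp_le' : `|hyp2F1_l l (hyp_arg r t s)| <= H.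
  by apply/hyp_le/norm_hyp_arg_le1 => //; [lra | apply/andP; split].
rewrite /Fsol_integrand /F0 s0 /F0pos !normrM.
rewrite (ger0_norm (powR_ge0 _ _)) (ger0_norm (expR_ge0 _)).
have -> : `|C0| * P * expR (r / 2) * (c * 2 ^+ k) * H * (powR t e * t ^+ k * expR (- t / 2)) =
  `|C0| * (P * powR t e) * (expR (r / 2) * expR (- t / 2)) * (c * 2 ^+ k * t ^+ k) * H.
  by ring.
by rewrite !ler_pM ?mulr_ge0 ?powR_ge0 ?expR_ge0.
Qed.

Lemma Fsol_subDpart (r t : R) : Fsol l n mu C0 r t - Dpart l n mu C0 r t =
  - (l%:R * (l%:R + 1) / (4 * r ^+ 2) * t *
     Rintegral lebesgue_measure `[- (t - r), r + t] (Fsol_integrand r t)).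
Proof. by rewrite /Fsol opprB; ring. Qed.

Lemma Fsol_integral_bound (r : R) : (0 < l)%N -> 0 < r -> exists2 A, 0 <= A &
  forall t, 2 * r + 1 <= t ->
  `|Rintegral lebesgue_measure `[- (t - r), r + t] (Fsol_integrand r t)| <=
  A * (2 * r) * expR (- t / 2) * (t ^+ (n - l - 1) * powR t (mu - 2^-1)).
Proof.
move=> l_gt0 r0; have [A A0 integrand_le] := Fsol_integrand_bound r0.
exists A => // t tT.
have -> : A * (2 * r) * expR (- t / 2) * (t ^+ (n - l - 1) * powR t (mu - 2^-1)) =
    A * (powR t (mu - 2^-1) * t ^+ (n - l - 1) * expR (- t / 2)) * (r + t - (t - r)).
  by ring.
apply: Rintegral_odd_le.
- by apply/andP; split; lra.
- by rewrite !mulr_ge0 ?powR_ge0 ?exprn_ge0 ?expR_ge0 //; lra.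
- exact: Fsol_integrand_measurable.
- by apply: Fsol_integrandN => //; rewrite gt_eqF.
- by move=> s; apply: integrand_le.
Qed.
End Integrand.

Theorem lemma2p1 (R : realType) (l n : nat) (mu C0 : R) :
  (1 <= l)%N -> (l.+1 <= n)%N -> l%:R - 3 / 2 < mu ->
  forall r : R, 0 < r ->
  exists C : R, exists T : R, 0 < C /\ 0 < T /\
    forall t : R, T <= t ->
      `| Fsol l n mu C0 r t - Dpart l n mu C0 r t |
        <= C * expR (- t / 2) * powR t (n%:R + mu - 3 / 2).
Proof.
(* [mu > l - 3/2] makes the integrand integrable near [s = 0]; the bound below
   needs no integrability, since the cancellation in [Rintegral_odd_le] is exact. *)
move=> l_gt0 lt_ln _ r r0.
have [A A0 int_le] := Fsol_integral_bound n mu C0 l_gt0 r0.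
set K := l%:R * (l%:R + 1) / (4 * r ^+ 2).
have l1 : 1 <= l%:R :> R by rewrite ler1n.
have K0 : 0 <= K by rewrite divr_ge0 ?mulr_ge0 ?sqr_ge0 //; lra.
have KA0 : 0 <= K * (A * (2 * r)) by apply: mulr_ge0 => //; apply: mulr_ge0 => //; lra.
exists (K * (A * (2 * r)) + 1), (2 * r + 1); split; first lra; split; first lra.
move=> t tT; have t1 : 1 <= t by lra.
have exponent_le : (n - l - 1).+1%:R + (mu - 2^-1) <= n%:R + mu - 3 / 2 :> R.
  by rewrite (_ : (n - l - 1).+1 = n - l)%N ?natrB 1?ltnW //; [lra | lia].
rewrite Fsol_subDpart normrN normrM ger0_norm; last by rewrite mulr_ge0 //; lra.
apply: le_trans (ler_wpM2l _ (int_le t tT)) _; first by rewrite mulr_ge0 //; lra.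
rewrite -/K (_ : K * t * _ = K * (A * (2 * r)) * expR (- t / 2) *
  (t ^+ (n - l - 1).+1 * powR t (mu - 2^-1))); last by rewrite exprS; ring.
rewrite exprn_mulpowR; last lra.
apply: ler_pM; [exact: mulr_ge0 KA0 (expR_ge0 _) | exact: powR_ge0 | | exact: ler_powR].
by rewrite ler_wpM2r ?expR_ge0 //; lra.
Qed.
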